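(* Let $X,Y$ be non-empty subsets of $A^+$. (i) $XY$ and $YX$ are both prefix (resp. maximal prefix) alt-induced codes if and only if $X$ and $Y$ are prefix (resp. maximal prefix) codes. (ii) $XY$ and $YX$ are both suffix (resp. maximal suffix) alt-induced codes if and only if $X$ and $Y$ are suffix (resp. maximal suffix) codes. (iii) $XY$ and $YX$ are both bifix (resp. thin maximal bifix) alt-induced codes if and only if $X$ and $Y$ are bifix (resp. thin maximal bifix) codes.
   Context: $A$ is a finite alphabet, $A^*$ the set of words, $A^+$ the non-empty words, $XY=\{xy:x\in X,y\in Y\}$. A code is a subset of $A^+$ in which every word has at most one factorization into its elements. A prefix (suffix) code is a subset of $A^+$ in which no word is a proper prefix (suffix) of another; a bifix code is both; such a code is maximal if not properly contained in another prefix (suffix, bifix) code over $A$. A set is thin if some word of $A^*$ is not a factor of any of its words. For non-empty $X,Y\subseteq A^+$, $(X,Y)$ is an alternative code if no word of $A^+$ admits two different similar alternative factorizations on $(X,Y)$ (factorizations $u_1\cdots u_n$, $n\ge2$, $u_i\in X\cup Y$, alternating between $X$ and $Y$; similar = beginning in the same set and ending in the same set); equivalently, $XY$ is a code and each element of $XY$ has exactly one factorization $xy$ with $x\in X,y\in Y$. An alt-induced code is a set $Z$ with $Z=UV$ for some alternative code $(U,V)$; a prefix (suffix, bifix, maximal prefix, etc.) alt-induced code is an alt-induced code which is also a prefix (suffix, bifix, maximal prefix, etc.) code. *)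

From mathcomp Require Import all_boot.
Set Implicit Arguments. Unset Strict Implicit. Unset Printing Implicit Defensive.

Section Codes.
Variable A : finType.
Definition lang := seq A -> Prop.

Definition in_Aplus (X : lang) : Prop := forall w, X w -> w <> [::].
Definition nonempty (X : lang) : Prop := exists w, X w.

Definition catl (X Y : lang) : lang :=
  fun w => exists x y, X x /\ Y y /\ w = x ++ y.

Definition code (X : lang) : Prop :=
  in_Aplus X /\
  forall ws1 ws2 : seq (seq A),
    (forall u, u \in ws1 -> X u) -> (forall u, u \in ws2 -> X u) ->
    flatten ws1 = flatten ws2 -> ws1 = ws2.

Definition proper_prefix (u v : seq A) := prefix u v && (u != v).
Definition proper_suffix (u v : seq A) := suffix u v && (u != v).

Definition prefix_code (X : lang) : Prop :=
  in_Aplus X /\ forall u v, X u -> X v -> ~ proper_prefix u v.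
Definition suffix_code (X : lang) : Prop :=
  in_Aplus X /\ forall u v, X u -> X v -> ~ proper_suffix u v.
Definition bifix_code (X : lang) : Prop := prefix_code X /\ suffix_code X.

Definition subl (X Y : lang) := forall w, X w -> Y w.

Definition maximal_in (P : lang -> Prop) (X : lang) : Prop :=
  P X /\ forall Z : lang, P Z -> subl X Z -> subl Z X.

Definition maximal_prefix_code := maximal_in prefix_code.
Definition maximal_suffix_code := maximal_in suffix_code.
Definition maximal_bifix_code := maximal_in bifix_code.

Definition thin (X : lang) : Prop :=
  exists w : seq A, forall u, X u -> ~~ infix w u.

(* Alternative factorization on (X,Y) starting in X (b = false) or Y (b = true):
   a list u_1 ... u_n, n >= 2, alternating between X and Y. *)
Definition alt_fact (X Y : lang) (b : bool) (ws : seq (seq A)) : Prop :=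
  2 <= size ws /\
  forall i, i < size ws -> (if odd i (+) b then Y else X) (nth [::] ws i).

(* (X,Y) alternative code: X, Y non-empty subsets of A^+, and no word has two
   different similar alternative factorizations (same starting set, same
   ending set -- i.e. same start and same parity of length). *)
Definition alt_code (X Y : lang) : Prop :=
  nonempty X /\ nonempty Y /\ in_Aplus X /\ in_Aplus Y /\
  forall (b : bool) (ws1 ws2 : seq (seq A)),
    alt_fact X Y b ws1 -> alt_fact X Y b ws2 ->
    odd (size ws1) = odd (size ws2) ->
    flatten ws1 = flatten ws2 -> ws1 = ws2.

Definition alt_induced (Z : lang) : Prop :=
  exists U V : lang, alt_code U V /\ forall w, Z w <-> catl U V w.

End Codes.

From mathcomp Require Import all_boot zify.
From Stdlib Require Import Classical FunctionalExtensionality PropExtensionality.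
Set Implicit Arguments. Unset Strict Implicit. Unset Printing Implicit Defensive.

(* Concatenation preserves prefix codes, and X is recovered as a prefix code
   from YX by cancelling a fixed left factor y.  Maximality passes through
   right completeness: a prefix code is maximal iff every word is comparable,
   in the prefix order, with one of its elements, and right completeness is
   stable under concatenation.  Suffix statements follow by reversing words.
   If X and Y are both prefix (resp. suffix) codes, alternating factorizations
   are decoded uniquely from the left (resp. right), so (X, Y) is an
   alternative code and XY, YX are alt-induced.

   The substantial step is that a thin maximal bifix code X is right complete.
   A maximal bifix code is right or left complete, since otherwise u u' could
   be added to it, with u prefix-incomparable and u' suffix-incomparable with
   X.  If X is left complete but not right complete, a prefix-incomparable
   word lets every left factor of X* be extended to a word that is not one;
   doing this uniformly for the suffixes of a word t that is not a factor of
   X gives w, while left completeness puts some a t w in X*, and the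
   factorization of a t w cuts t, leaving a suffix of t followed by w in X*. *)

Section Codes.
Variable A : finType.
Implicit Types (X Y Z : lang A) (u v w x y : seq A) (ws : seq (seq A)).

Lemma catI u : injective (cat u).
Proof. by move=> v w /(congr1 (drop (size u))); rewrite !drop_size_cat. Qed.

Lemma cat_eq_prefix u v u' v' : u ++ v = u' ++ v' -> size u <= size u' -> prefix u u'.
Proof.
by move=> E le; rewrite prefixE -(takel_cat v' le) -E take_size_cat.
Qed.

Lemma cat_eq_prefixes u v u' v' : u ++ v = u' ++ v' -> prefix u u' || prefix u' u.
Proof.
move=> E; case: (leqP (size u) (size u')) => [|/ltnW] le.
  by rewrite (cat_eq_prefix E le).
by rewrite (cat_eq_prefix (esym E) le) orbT.
Qed.

Lemma cat_eq_suffixes u v u' v' : u ++ v = u' ++ v' -> suffix v v' || suffix v' v.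
Proof.
by move=> E; rewrite -!prefix_rev; apply: (@cat_eq_prefixes _ (rev u) _ (rev u')); rewrite -!rev_cat E.
Qed.

Lemma prefix_code_prefix X x y : prefix_code X -> X x -> X y -> prefix x y -> x = y.
Proof.
move=> [_ pX] Xx Xy xy; apply: NNPP => /eqP neq.
by apply: (pX x y Xx Xy); rewrite /proper_prefix xy neq.
Qed.

Lemma prefix_code_cat X x y u v : prefix_code X -> X x -> X y -> x ++ u = y ++ v -> x = y.
Proof.
move=> pX Xx Xy /cat_eq_prefixes/orP[] le; first exact: (prefix_code_prefix pX Xx Xy le).
by rewrite (prefix_code_prefix pX Xy Xx le).
Qed.

Lemma in_Aplus_catl X Y : in_Aplus X -> in_Aplus (catl X Y).
Proof. by move=> aX _ [[|a x] [y [/aX Xx [_ ->]]]]. Qed.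

Lemma prefix_code_catl X Y : prefix_code X -> prefix_code Y -> prefix_code (catl X Y).
Proof.
move=> pX pY; split; first exact: in_Aplus_catl pX.1.
move=> _ _ [x [y [Xx [Yy ->]]]] [x' [y' [Xx' [Yy' ->]]]] /andP[/prefixP[r E] neq].
rewrite -catA in E; have exx := prefix_code_cat pX Xx' Xx E; subst x'.
have eyy : y' = y.
  by apply: (prefix_code_cat (u := [::]) (v := r) pY Yy' Yy); rewrite cats0 (catI E).
by rewrite eyy eqxx in neq.
Qed.

Lemma catl_prefix_code_r X Y : prefix_code (catl Y X) -> nonempty Y -> in_Aplus X ->
  prefix_code X.
Proof.
move=> [_ pYX] [y Yy] aX; split=> // u v Xu Xv /andP[uv neq].
apply: (pYX (y ++ u) (y ++ v)); [by exists y, u | by exists y, v |].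
by rewrite /proper_prefix prefix_catr // eqxx uv /= (inj_eq (@catI y)).
Qed.

Definition right_complete X := forall u, exists2 x, X x & prefix u x || prefix x u.
Definition left_complete X := forall u, exists2 x, X x & suffix u x || suffix x u.

Lemma incomparable_witness (R : rel (seq A)) X :
  ~ (forall u, exists2 x, X x & R u x || R x u) ->
  exists u, forall x, X x -> ~~ R u x && ~~ R x u.
Proof.
move=> not_complete; apply: NNPP => no_witness; apply: not_complete => u.
apply: NNPP => not_comparable; apply: no_witness; exists u => x Xx.
by rewrite -negb_or; apply/negP => Ruxx; apply: not_comparable; exists x.
Qed.

Lemma maximal_prefix_code_right_complete X :
  maximal_prefix_code X -> nonempty X -> right_complete X.
Proof.
move=> [pX maxX] [x0 Xx0]; apply: NNPP => /incomparable_witness[u hu].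
pose Z w := X w \/ w = u.
have pZ : prefix_code Z.
  split=> [w [/pX.1 //| -> u0]|].
    by move: (hu x0 Xx0); rewrite u0 prefix0s.
  move=> a b [Xa|->] [Xb|->] /andP[ab neq].
  - by apply: (pX.2 a b Xa Xb); rewrite /proper_prefix ab neq.
  - by move: (hu a Xa); rewrite ab andbF.
  - by move: (hu b Xb); rewrite ab.
  - by rewrite eqxx in neq.
have Xu : X u by apply: (maxX Z pZ) => [w|]; [left | right].
by move: (hu u Xu); rewrite prefix_refl.
Qed.

Lemma right_complete_maximal (P : lang A -> Prop) X :
  (forall Z, P Z -> prefix_code Z) -> P X -> right_complete X -> maximal_in P X.
Proof.
move=> Pprefix PX rcX; split=> // Z /Pprefix pZ XZ w Zw.
have [x Xx /orP[] le] := rcX w.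
- by rewrite (prefix_code_prefix pZ Zw (XZ x Xx) le).
- by rewrite -(prefix_code_prefix pZ (XZ x Xx) Zw le).
Qed.

Lemma right_complete_catl X Y :
  right_complete X -> right_complete Y -> nonempty Y -> right_complete (catl X Y).
Proof.
move=> rcX rcY [y0 Yy0] u; have [x Xx /orP[ux|/prefixP[u' ->]]] := rcX u.
  by exists (x ++ y0); [exists x, y0 | rewrite prefix_catl].
have [y Yy uy] := rcY u'; exists (x ++ y); first by exists x, y.
by rewrite !prefix_catr // eqxx.
Qed.

Lemma maximal_in_catl_l (P : lang A -> Prop) X Y :
  (forall Z, P Z -> prefix_code Z /\ P (catl Z Y)) -> nonempty Y -> P X ->
  maximal_in P (catl X Y) -> maximal_in P X.
Proof.
move=> PcatY [y0 Yy0] PX [_ maxXY]; split=> // Z PZ XZ z Zz.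
have [pZ PZY] := PcatY Z PZ.
have XYZY : subl (catl X Y) (catl Z Y).
  by move=> _ [x [y [Xx [Yy ->]]]]; exists x, y; split; first exact: XZ.
have [x [y [Xx [_ E]]]] : catl X Y (z ++ y0).
  by apply: (maxXY _ PZY XYZY); exists z, y0.
by rewrite (prefix_code_cat pZ Zz (XZ x Xx) E).
Qed.

Lemma maximal_prefix_code_catl X Y : maximal_prefix_code X -> maximal_prefix_code Y ->
  nonempty X -> nonempty Y -> maximal_prefix_code (catl X Y).
Proof.
move=> mX mY nX nY; apply: right_complete_maximal => //.
  exact: prefix_code_catl mX.1 mY.1.
by apply: (right_complete_catl _ _ nY); apply: maximal_prefix_code_right_complete.
Qed.

Lemma catl_maximal_prefix_code_l X Y : maximal_prefix_code (catl X Y) ->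
  prefix_code X -> prefix_code Y -> nonempty Y -> maximal_prefix_code X.
Proof.
move=> mXY pX pY nY; apply: maximal_in_catl_l mXY => // Z pZ.
by split; last exact: prefix_code_catl.
Qed.

Definition revl X : lang A := fun w => X (rev w).

Lemma revlK : involutive revl.
Proof. by move=> X; apply: functional_extensionality => w; rewrite /revl revK. Qed.

Lemma revl_catl X Y : revl (catl X Y) = catl (revl Y) (revl X).
Proof.
apply: functional_extensionality => w; apply: propositional_extensionality; split.
  move=> [x [y [Xx [Yy E]]]]; exists (rev y), (rev x); rewrite /revl !revK.
  by do !split => //; rewrite -[w]revK E rev_cat.
by move=> [y [x [Yy [Xx ->]]]]; exists (rev x), (rev y); rewrite rev_cat.
Qed.

Lemma nonempty_revl X : nonempty (revl X) <-> nonempty X.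
Proof. by split=> -[w Xw]; exists (rev w); rewrite /revl ?revK. Qed.

Lemma in_Aplus_revl X : in_Aplus (revl X) <-> in_Aplus X.
Proof.
split=> aX w Xw w0.
  by apply: (aX (rev w)); rewrite /revl ?revK // w0.
by apply: (aX _ Xw); rewrite w0.
Qed.

Lemma suffix_code_revl X : suffix_code X <-> prefix_code (revl X).
Proof.
rewrite /suffix_code /prefix_code in_Aplus_revl /proper_suffix /proper_prefix.
have rev_neq u v : (rev u != rev v) = (u != v) by rewrite (inj_eq (can_inj revK)).
split=> -[aX sX]; split=> // u v Xu Xv.
  by rewrite -suffix_rev -rev_neq; apply: sX.
by rewrite -prefix_rev -rev_neq; apply: sX; rewrite /revl revK.
Qed.

Lemma prefix_code_revl X : prefix_code X <-> suffix_code (revl X).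
Proof. by rewrite suffix_code_revl revlK. Qed.

Lemma maximal_in_revl (P Q : lang A -> Prop) X :
  (forall Z, P Z <-> Q (revl Z)) -> maximal_in P X <-> maximal_in Q (revl X).
Proof.
move=> PQ; rewrite /maximal_in PQ; split=> -[QX maxX]; split=> // Z hZ XZ w Zw.
  have PZ : P (revl Z) by apply/PQ; rewrite revlK.
  apply: (maxX _ PZ); last by rewrite /revl revK.
  by move=> u Xu; apply: XZ; rewrite /revl revK.
have /(_ (rev w)) := maxX (revl Z) ((PQ Z).1 hZ) (fun u Xu => XZ _ Xu).
by rewrite /revl revK; apply.
Qed.

Lemma maximal_suffix_code_revl X : maximal_suffix_code X <-> maximal_prefix_code (revl X).
Proof. exact/maximal_in_revl/suffix_code_revl. Qed.

Lemma suffix_code_catl X Y : suffix_code X -> suffix_code Y -> suffix_code (catl X Y).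
Proof. rewrite !suffix_code_revl revl_catl => sX sY; exact: prefix_code_catl. Qed.

Lemma catl_suffix_code_l X Y : suffix_code (catl X Y) -> nonempty Y -> in_Aplus X ->
  suffix_code X.
Proof.
rewrite !suffix_code_revl revl_catl -nonempty_revl -in_Aplus_revl.
exact: catl_prefix_code_r.
Qed.

Lemma maximal_suffix_code_catl X Y : maximal_suffix_code X -> maximal_suffix_code Y ->
  nonempty X -> nonempty Y -> maximal_suffix_code (catl X Y).
Proof.
rewrite !maximal_suffix_code_revl revl_catl -(nonempty_revl X) -(nonempty_revl Y).
by move=> mX mY nX nY; apply: maximal_prefix_code_catl.
Qed.

Lemma catl_maximal_suffix_code_r X Y : maximal_suffix_code (catl X Y) ->
  suffix_code X -> suffix_code Y -> nonempty X -> maximal_suffix_code Y.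
Proof.
rewrite !maximal_suffix_code_revl !suffix_code_revl revl_catl -nonempty_revl.
by move=> mXY sX sY nX; apply: catl_maximal_prefix_code_l mXY sY sX nX.
Qed.

Lemma bifix_code_catl X Y : bifix_code X -> bifix_code Y -> bifix_code (catl X Y).
Proof.
by move=> [pX sX] [pY sY]; split; [apply: prefix_code_catl | apply: suffix_code_catl].
Qed.

Lemma catl_maximal_bifix_code_l X Y : maximal_bifix_code (catl X Y) ->
  bifix_code X -> bifix_code Y -> nonempty Y -> maximal_bifix_code X.
Proof.
move=> mXY bX bY nY; apply: maximal_in_catl_l mXY => // Z bZ.
by split; [case: bZ | apply: bifix_code_catl].
Qed.

Lemma thin_catl X Y : thin X -> thin Y -> thin (catl X Y).
Proof.
move=> [t1 tX] [t2 tY]; exists (t1 ++ t2) => _ [x [y [Xx [Yy ->]]]].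
apply/infixP => -[s [s' E]].
have E' : x ++ y = (s ++ t1) ++ (t2 ++ s') by rewrite E -!catA.
case/orP: (cat_eq_prefixes E') => /prefixP[z Ez].
- move/negP: (tY y Yy); apply; apply/infixP; exists z, s'.
  by apply: (@catI x); rewrite E' Ez -!catA.
- by move/negP: (tX x Xx); apply; apply/infixP; exists s, z; rewrite Ez -!catA.
Qed.

Lemma catl_thin_l X Y : thin (catl X Y) -> nonempty Y -> thin X.
Proof.
move=> [t tXY] [y0 Yy0]; exists t => x Xx; apply: contra (tXY (x ++ y0) _).
  exact: infix_catr.
by exists x, y0.
Qed.

Lemma flatten_inj_prefix_codes (P : nat -> lang A) ws1 ws2 :
  (forall i, prefix_code (P i)) ->
  (forall i, i < size ws1 -> P i (nth [::] ws1 i)) ->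
  (forall i, i < size ws2 -> P i (nth [::] ws2 i)) ->
  flatten ws1 = flatten ws2 -> ws1 = ws2.
Proof.
elim: ws1 ws2 P => [|x ws1 IH] [|y ws2] P pP P1 P2 //=.
- by have /(pP 0).1 := P2 0 erefl; case: y {P2} => [/(_ erefl)|].
- by have /(pP 0).1 := P1 0 erefl; case: x {P1 IH} => [/(_ erefl)|].
move=> E; have exy : x = y := prefix_code_cat (pP 0) (P1 0 erefl) (P2 0 erefl) E.
subst y; congr (_ :: _); apply: (IH ws2 (fun i => P i.+1)) (catI E) => // i.
- exact: (P1 i.+1).
- exact: (P2 i.+1).
Qed.

Lemma alt_code_prefix X Y : prefix_code X -> prefix_code Y ->
  nonempty X -> nonempty Y -> alt_code X Y.
Proof.
move=> pX pY nX nY; do 4 (split; first by [apply: pX.1 | apply: pY.1 | done]).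
move=> b ws1 ws2 [_ f1] [_ f2] _.
by apply: (flatten_inj_prefix_codes (P := fun i => if odd i (+) b then Y else X)) f1 f2 => i;
  case: ifP.
Qed.

Lemma alt_fact_revl X Y b ws : alt_fact X Y b ws ->
  alt_fact (revl X) (revl Y) (~~ odd (size ws) (+) b) (map rev (rev ws)).
Proof.
rewrite /alt_fact size_map size_rev => -[ge2 f]; split=> // j lt_j.
rewrite (nth_map [::]) ?size_rev // nth_rev //.
have lt_i : size ws - j.+1 < size ws by rewrite ltn_subrL; lia.
have := f _ lt_i; rewrite oddB // oddS.
by clear f; case: (odd (size ws)) (odd j) b => [] [] []; rewrite /= /revl revK.
Qed.

Lemma alt_code_revl X Y : alt_code (revl X) (revl Y) -> alt_code X Y.
Proof.
rewrite /alt_code !nonempty_revl !in_Aplus_revl => -[nX [nY [aX [aY uniq]]]].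
do 4 (split=> //); move=> b ws1 ws2 f1 f2 same_odd E.
have := alt_fact_revl f2; rewrite -same_odd => /(uniq _ _ _ (alt_fact_revl f1)).
rewrite !size_map !size_rev same_odd => /(_ erefl).
rewrite !map_rev -!rev_flatten E => /(_ erefl).
by move=> /(can_inj (@revK (seq A))) /(inj_map (can_inj (@revK A))).
Qed.

Lemma alt_code_suffix X Y : suffix_code X -> suffix_code Y ->
  nonempty X -> nonempty Y -> alt_code X Y.
Proof.
rewrite !suffix_code_revl -(nonempty_revl X) -(nonempty_revl Y) => sX sY nX nY.
exact/alt_code_revl/alt_code_prefix.
Qed.

Lemma alt_code_induced X Y : alt_code X Y -> alt_induced (catl X Y).
Proof. by exists X, Y. Qed.

Definition star X w := exists2 ws, (forall u, u \in ws -> X u) & flatten ws = w.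
Definition left_factor X p := exists q, star X (p ++ q).

Lemma star_right_unitary X p r : prefix_code X -> star X p -> star X (p ++ r) -> star X r.
Proof.
move=> pX [ws1 Xws1 <-] [ws2]; elim: ws1 ws2 Xws1 => [|x ws1 IH] ws2 Xws1 Xws2 E.
  by exists ws2.
have Xx := Xws1 x (mem_head _ _).
case: ws2 Xws2 E => [|y ws2] Xws2 /=.
  by have := pX.1 x Xx; case: x {Xws1 Xx IH} => [/(_ erefl)|].
rewrite -catA => E; have exy : y = x := prefix_code_cat pX (Xws2 y (mem_head _ _)) Xx E.
subst y; apply: (IH ws2) (catI E) => u u_in.
- by apply: Xws1; rewrite inE u_in orbT.
- by apply: Xws2; rewrite inE u_in orbT.
Qed.

Lemma left_factor_catl X p q : left_factor X (p ++ q) -> left_factor X p.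
Proof. by move=> [r]; rewrite -catA; exists (q ++ r). Qed.

Lemma star_incomparable X u z : nonempty X ->
  (forall x, X x -> ~~ prefix u x && ~~ prefix x u) -> ~ star X (u ++ z).
Proof.
move=> [x0 Xx0] hu [[|x ws] Xws /= E].
  have u0 : u = [::] by case: u {hu} E.
  by move: (hu x0 Xx0); rewrite u0 prefix0s.
have /orP[] := cat_eq_prefixes E => le; move: (hu x (Xws x (mem_head _ _))).
- by rewrite le andbF.
- by rewrite le.
Qed.

Lemma left_factor_extend_out X u s : prefix_code X -> nonempty X ->
  (forall x, X x -> ~~ prefix u x && ~~ prefix x u) -> exists w, ~ left_factor X (s ++ w).
Proof.
move=> pX nX hu; have [[q sq]|not_lf] := classic (left_factor X s); last first.
  by exists [::]; rewrite cats0.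
exists (q ++ u) => -[z]; rewrite -!catA catA => /(star_right_unitary pX sq).
exact: star_incomparable.
Qed.

Lemma left_factor_extend_out_seq X (S : seq (seq A)) :
  (forall s, exists w, ~ left_factor X (s ++ w)) ->
  exists w, forall s, s \in S -> ~ left_factor X (s ++ w).
Proof.
move=> ext; elim: S => [|s S [w hw]]; first by exists [::].
have [w' hw'] := ext (s ++ w); exists (w ++ w') => s'.
rewrite inE => /orP[/eqP -> | s'_in]; first by rewrite catA.
by rewrite catA => /left_factor_catl; apply: hw.
Qed.

Lemma star_cut X t p r : (forall x, X x -> ~~ infix t x) -> t != [::] ->
  star X (p ++ t ++ r) -> exists2 o, o < size t & star X (drop o t ++ r).
Proof.
move=> tX t_nil [ws]; elim: ws p => [|x ws IH] p Xws /=.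
  by case: t t_nil {tX} => // a t _; case: p.
have Xx := Xws x (mem_head _ _); have {}Xws u : u \in ws -> X u.
  by move=> u_in; apply: Xws; rewrite inE u_in orbT.
move=> E; case: (leqP (size x) (size p)) => [le_xp | lt_px].
  have /prefixP[p' Ep] := cat_eq_prefix E le_xp.
  by apply: (IH p' Xws); apply: (@catI x); rewrite E Ep -catA.
case: (leqP (size (p ++ t)) (size x)) => [le_ptx | lt_xpt].
  have /prefixP[m Em] := cat_eq_prefix (esym (etrans E (catA _ _ _))) le_ptx.
  by move: (tX x Xx); rewrite Em -catA infix_infix.
have /prefixP[s Es] := cat_eq_prefix (etrans E (catA _ _ _)) (ltnW lt_xpt).
have /prefixP[t' Ex] := cat_eq_prefix (esym E) (ltnW lt_px).
have Et : t = t' ++ s by apply: (@catI p); rewrite Es Ex -catA.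
exists (size t'); first by move: lt_xpt; rewrite Ex !size_cat ltn_add2l.
rewrite Et drop_size_cat //; exists ws => //.
by apply: (@catI x); rewrite E Ex Et -!catA.
Qed.

Lemma left_complete_star X : left_complete X -> in_Aplus X ->
  forall w, exists a, star X (a ++ w).
Proof.
move=> lcX aX w; have [n] := ubnP (size w); elim: n w => // n IH w lt_wn.
have [x Xx /orP[/suffixP[a Ex] | /suffixP[w' Ew]]] := lcX w.
  by exists a, [:: x]; [move=> u; rewrite inE => /eqP -> | rewrite /= cats0 Ex].
have lt_w'n : size (w' : seq A) < n.
  have : 0 < size x by rewrite lt0n size_eq0; apply/eqP/aX.
  by move: lt_wn; rewrite Ew size_cat; lia.
have [a [ws Xws E]] := IH w' lt_w'n; exists a, (rcons ws x).
  by move=> u; rewrite mem_rcons inE => /orP[/eqP -> | /Xws].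
by rewrite -cats1 flatten_cat E Ew /= cats0 catA.
Qed.

Lemma thin_left_complete_right_complete X : prefix_code X -> nonempty X -> thin X ->
  left_complete X -> right_complete X.
Proof.
move=> pX nX [t tX] lcX; apply: NNPP => /incomparable_witness[u hu].
have t_nil : t != [::].
  by case: nX => x0 Xx0; apply: contra (tX x0 Xx0) => /eqP ->; rewrite infix0s.
have [w dead] := left_factor_extend_out_seq
  [seq drop o t | o <- iota 0 (size t)] (fun s => left_factor_extend_out s pX nX hu).
have [a atw] := left_complete_star lcX pX.1 (t ++ w).
have [o lt_ot otw] := star_cut tX t_nil atw.
apply: (dead (drop o t)); last by exists [::]; rewrite cats0.
by apply/mapP; exists o; rewrite // mem_iota.
Qed.

Lemma maximal_bifix_code_complete X : maximal_bifix_code X -> nonempty X ->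
  right_complete X \/ left_complete X.
Proof.
move=> [[pX sX] maxX] [x0 Xx0]; apply: NNPP => /not_or_and[].
move=> /incomparable_witness[u hu] /incomparable_witness[u' hu'].
have uu'_nil : u ++ u' <> [::].
  by case: u hu => [/(_ x0 Xx0)|] //; rewrite prefix0s.
pose Z w := X w \/ w = u ++ u'.
have bZ : bifix_code Z.
  have aZ : in_Aplus Z by move=> w [/pX.1 | ->].
  split; split=> //.
  - move=> a b [Xa|->] [Xb|->] /andP[ab neq].
    + by apply: (pX.2 a b Xa Xb); rewrite /proper_prefix ab neq.
    + have /prefixP[s Es] := ab; move: (hu a Xa).
      by have /orP[] := cat_eq_prefixes (esym Es) => ->; rewrite ?andbF.
    + by move: (hu b Xb); rewrite (catl_prefix ab).
    + by rewrite eqxx in neq.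
  - move=> a b [Xa|->] [Xb|->] /andP[ab neq].
    + by apply: (sX.2 a b Xa Xb); rewrite /proper_suffix ab neq.
    + have /suffixP[s Es] := ab; move: (hu' a Xa).
      by have /orP[] := cat_eq_suffixes (esym Es) => ->; rewrite ?andbF.
    + by move: (hu' b Xb); rewrite (suffix_trans (suffix_suffix u u') ab).
    + by rewrite eqxx in neq.
have Xuu' : X (u ++ u') by apply: (maxX Z bZ) => [w|]; [left | right].
by move: (hu _ Xuu'); rewrite prefix_prefix.
Qed.

Lemma thin_maximal_bifix_code_right_complete X : thin X -> maximal_bifix_code X ->
  nonempty X -> right_complete X.
Proof.
move=> tX mX nX; have [//|lcX] := maximal_bifix_code_complete mX nX.
exact: thin_left_complete_right_complete mX.1.1 nX tX lcX.
Qed.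

Lemma maximal_bifix_code_catl X Y : thin X -> maximal_bifix_code X ->
  thin Y -> maximal_bifix_code Y -> nonempty X -> nonempty Y ->
  maximal_bifix_code (catl X Y).
Proof.
move=> tX mX tY mY nX nY; apply: right_complete_maximal => [Z [] //||].
  exact: bifix_code_catl mX.1 mY.1.
by apply: (right_complete_catl _ _ nY); apply: thin_maximal_bifix_code_right_complete.
Qed.

Section Pairs.
Variables X Y : lang A.
Hypotheses (nX : nonempty X) (nY : nonempty Y) (aX : in_Aplus X) (aY : in_Aplus Y).

Lemma alt_induced_prefix_codes :
  (alt_induced (catl X Y) /\ prefix_code (catl X Y) /\
   alt_induced (catl Y X) /\ prefix_code (catl Y X))
    <-> prefix_code X /\ prefix_code Y.
Proof.
split=> [[_ [pXY [_ pYX]]] | [pX pY]].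
  by split; [apply: catl_prefix_code_r pYX nY aX | apply: catl_prefix_code_r pXY nX aY].
have iXY := alt_code_induced (alt_code_prefix pX pY nX nY).
have iYX := alt_code_induced (alt_code_prefix pY pX nY nX).
by split; [|split; [|split]] => //; apply: prefix_code_catl.
Qed.

Lemma alt_induced_maximal_prefix_codes :
  (alt_induced (catl X Y) /\ maximal_prefix_code (catl X Y) /\
   alt_induced (catl Y X) /\ maximal_prefix_code (catl Y X))
    <-> maximal_prefix_code X /\ maximal_prefix_code Y.
Proof.
split=> [[_ [mXY [_ mYX]]] | [mX mY]].
  have pX := catl_prefix_code_r mYX.1 nY aX; have pY := catl_prefix_code_r mXY.1 nX aY.
  by split; [apply: catl_maximal_prefix_code_l mXY pX pY nY
            | apply: catl_maximal_prefix_code_l mYX pY pX nX].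
have iXY := alt_code_induced (alt_code_prefix mX.1 mY.1 nX nY).
have iYX := alt_code_induced (alt_code_prefix mY.1 mX.1 nY nX).
by split; [|split; [|split]] => //; apply: maximal_prefix_code_catl.
Qed.

Lemma alt_induced_suffix_codes :
  (alt_induced (catl X Y) /\ suffix_code (catl X Y) /\
   alt_induced (catl Y X) /\ suffix_code (catl Y X))
    <-> suffix_code X /\ suffix_code Y.
Proof.
split=> [[_ [sXY [_ sYX]]] | [sX sY]].
  by split; [apply: catl_suffix_code_l sXY nY aX | apply: catl_suffix_code_l sYX nX aY].
have iXY := alt_code_induced (alt_code_suffix sX sY nX nY).
have iYX := alt_code_induced (alt_code_suffix sY sX nY nX).
by split; [|split; [|split]] => //; apply: suffix_code_catl.
Qed.

Lemma alt_induced_maximal_suffix_codes :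
  (alt_induced (catl X Y) /\ maximal_suffix_code (catl X Y) /\
   alt_induced (catl Y X) /\ maximal_suffix_code (catl Y X))
    <-> maximal_suffix_code X /\ maximal_suffix_code Y.
Proof.
split=> [[_ [mXY [_ mYX]]] | [mX mY]].
  have sX := catl_suffix_code_l mXY.1 nY aX; have sY := catl_suffix_code_l mYX.1 nX aY.
  by split; [apply: catl_maximal_suffix_code_r mYX sY sX nY
            | apply: catl_maximal_suffix_code_r mXY sX sY nX].
have iXY := alt_code_induced (alt_code_suffix mX.1 mY.1 nX nY).
have iYX := alt_code_induced (alt_code_suffix mY.1 mX.1 nY nX).
by split; [|split; [|split]] => //; apply: maximal_suffix_code_catl.
Qed.

Lemma catl_bifix_codes : bifix_code (catl X Y) -> bifix_code (catl Y X) ->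
  bifix_code X /\ bifix_code Y.
Proof.
move=> [pXY sXY] [pYX sYX]; split; split.
- exact: catl_prefix_code_r pYX nY aX.
- exact: catl_suffix_code_l sXY nY aX.
- exact: catl_prefix_code_r pXY nX aY.
- exact: catl_suffix_code_l sYX nX aY.
Qed.

Lemma alt_induced_bifix_codes :
  (alt_induced (catl X Y) /\ bifix_code (catl X Y) /\
   alt_induced (catl Y X) /\ bifix_code (catl Y X))
    <-> bifix_code X /\ bifix_code Y.
Proof.
split=> [[_ [bXY [_ bYX]]] | [bX bY]]; first exact: catl_bifix_codes.
have iXY := alt_code_induced (alt_code_prefix bX.1 bY.1 nX nY).
have iYX := alt_code_induced (alt_code_prefix bY.1 bX.1 nY nX).
by split; [|split; [|split]] => //; apply: bifix_code_catl.
Qed.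

Lemma alt_induced_thin_maximal_bifix_codes :
  (alt_induced (catl X Y) /\ thin (catl X Y) /\ maximal_bifix_code (catl X Y) /\
   alt_induced (catl Y X) /\ thin (catl Y X) /\ maximal_bifix_code (catl Y X))
    <-> (thin X /\ maximal_bifix_code X /\ thin Y /\ maximal_bifix_code Y).
Proof.
split=> [[_ [tXY [mXY [_ [tYX mYX]]]]] | [tX [mX [tY mY]]]].
  have [bX bY] := catl_bifix_codes mXY.1 mYX.1.
  split; first exact: catl_thin_l tXY nY.
  split; first exact: catl_maximal_bifix_code_l mXY bX bY nY.
  split; first exact: catl_thin_l tYX nX.
  exact: catl_maximal_bifix_code_l mYX bY bX nX.
have iXY := alt_code_induced (alt_code_prefix mX.1.1 mY.1.1 nX nY).
have iYX := alt_code_induced (alt_code_prefix mY.1.1 mX.1.1 nY nX).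
split=> //; split; first exact: thin_catl.
split; first exact: maximal_bifix_code_catl.
split=> //; split; first exact: thin_catl.
exact: maximal_bifix_code_catl.
Qed.

End Pairs.
End Codes.

Theorem theoremT (A : finType) (X Y : lang A) :
  nonempty X -> nonempty Y -> in_Aplus X -> in_Aplus Y ->
  (* (i) *)
  ((alt_induced (catl X Y) /\ prefix_code (catl X Y) /\
    alt_induced (catl Y X) /\ prefix_code (catl Y X))
     <-> (prefix_code X /\ prefix_code Y)) /\
  ((alt_induced (catl X Y) /\ maximal_prefix_code (catl X Y) /\
    alt_induced (catl Y X) /\ maximal_prefix_code (catl Y X))
     <-> (maximal_prefix_code X /\ maximal_prefix_code Y)) /\
  (* (ii) *)
  ((alt_induced (catl X Y) /\ suffix_code (catl X Y) /\
    alt_induced (catl Y X) /\ suffix_code (catl Y X))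
     <-> (suffix_code X /\ suffix_code Y)) /\
  ((alt_induced (catl X Y) /\ maximal_suffix_code (catl X Y) /\
    alt_induced (catl Y X) /\ maximal_suffix_code (catl Y X))
     <-> (maximal_suffix_code X /\ maximal_suffix_code Y)) /\
  (* (iii) *)
  ((alt_induced (catl X Y) /\ bifix_code (catl X Y) /\
    alt_induced (catl Y X) /\ bifix_code (catl Y X))
     <-> (bifix_code X /\ bifix_code Y)) /\
  ((alt_induced (catl X Y) /\ thin (catl X Y) /\ maximal_bifix_code (catl X Y) /\
    alt_induced (catl Y X) /\ thin (catl Y X) /\ maximal_bifix_code (catl Y X))
     <-> (thin X /\ maximal_bifix_code X /\ thin Y /\ maximal_bifix_code Y)).
Proof.
move=> nX nY aX aY; split; first exact: alt_induced_prefix_codes.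
split; first exact: alt_induced_maximal_prefix_codes.
split; first exact: alt_induced_suffix_codes.
split; first exact: alt_induced_maximal_suffix_codes.
split; first exact: alt_induced_bifix_codes.
exact: alt_induced_thin_maximal_bifix_codes.
Qed.
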